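(* Let $T$ be a locally finite, infinite tree with root $o$ such that every vertex has forward degree at least $2$. Let $d$ be an ultrametric on $\partial T$ whose closed balls (of positive radius) are exactly the sets $\partial T_x$, $x \in T$. Then there is an ultrametric element $\phi$ on $T$ such that $d = d_{\phi}$.
   Context: $T$ is identified with its vertex set. For $x \neq o$, $x^-$ denotes the neighbour of $x$ on the geodesic from $o$ to $x$; the forward degree of $x$ is $\deg^+(x) = |\{y \in T : y^- = x\}|$. A ray is a one-sided infinite path of distinct successive neighbours; two rays are equivalent if their symmetric difference is finite; an end is an equivalence class of rays, and $\partial T$ is the set of ends. For $\xi\in\partial T$, $\pi(o,\xi)$ is the unique ray from $o$ representing $\xi$. For $x \in T$, $T_x = \{y \in T : x \text{ lies on the geodesic from } o \text{ to } y\}$ and $\partial T_x$ is the set of ends having a representative ray inside $T_x$. For distinct $\xi,\eta \in \partial T$, the confluent $\xi \wedge \eta$ is the last common vertex of the rays $\pi(o,\xi)$ and $\pi(o,\eta)$. An ultrametric element is a function $\phi : T \to (0,\infty)$ with (i) $\phi(x^-) > \phi(x)$ for every $x \neq o$ and (ii) $\phi(x_n) \to 0$ along every geodesic ray $[x_0,x_1,x_2,\dots]$. It induces the ultrametric $d_\phi$ on $\partial T$ given by $d_\phi(\xi,\xi)=0$ and $d_\phi(\xi,\eta) = \phi(\xi\wedge\eta)$ for $\xi \neq \eta$. *)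

(* A rooted tree (T, o) is given by its vertex type V, the root o
   and the predecessor map x |-> x^- (par), with par o = o by convention. *)
From Stdlib Require Import Reals List.
Open Scope R_scope.

Set Implicit Arguments.
Section Tree.
Variables (V : Type) (o : V) (par : V -> V).

Definition rooted_tree : Prop :=
  par o = o /\ forall x, exists n, Nat.iter n par x = o.

Definition child (x y : V) : Prop := y <> o /\ par y = x.

Definition adj (x y : V) : Prop := child x y \/ child y x.

Definition locally_finite : Prop :=
  forall x, exists l : list V, forall y, adj x y -> In y l.

Definition infinite_tree : Prop := ~ exists l : list V, forall x, In x l.

Definition fdeg_ge2 (x : V) : Prop :=
  exists y1 y2, y1 <> y2 /\ child x y1 /\ child x y2.

Definition ray (r : nat -> V) : Prop :=
  (forall m n, r m = r n -> m = n) /\ forall n, adj (r n) (r (S n)).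

Definition in_range (r : nat -> V) (v : V) : Prop := exists n, r n = v.

Definition ray_equiv (r s : nat -> V) : Prop :=
  exists l : list V, forall v, (in_range r v /\ ~ in_range s v \/
                                in_range s v /\ ~ in_range r v) -> In v l.

Definition ray_from_o (r : nat -> V) : Prop :=
  r 0%nat = o /\ forall n, child (r n) (r (S n)).

(* the space of ends, each end identified with its unique representative ray from o *)
Definition End_ := { r : nat -> V | ray_from_o r }.

Definition subtree (x y : V) : Prop := exists n, Nat.iter n par y = x.

Definition bdry_sub (x : V) (xi : End_) : Prop :=
  exists r, ray r /\ ray_equiv r (proj1_sig xi) /\ forall n, subtree x (r n).

Definition confluent (xi eta : End_) (v : V) : Prop :=
  exists k, proj1_sig xi k = v /\ proj1_sig eta k = v /\
            proj1_sig xi (S k) <> proj1_sig eta (S k).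

Definition ultrametric (d : End_ -> End_ -> R) : Prop :=
  (forall xi eta, d xi eta = 0 <-> xi = eta) /\
  (forall xi eta, 0 <= d xi eta) /\
  (forall xi eta, d xi eta = d eta xi) /\
  (forall xi eta zeta, d xi zeta <= Rmax (d xi eta) (d eta zeta)).

Definition closed_ball (d : End_ -> End_ -> R) (xi : End_) (r : R) (eta : End_) : Prop :=
  d xi eta <= r.

Definition balls_are_subtrees (d : End_ -> End_ -> R) : Prop :=
  (forall xi r, 0 < r -> exists x, forall eta, closed_ball d xi r eta <-> bdry_sub x eta) /\
  (forall x, exists xi r, 0 < r /\ forall eta, closed_ball d xi r eta <-> bdry_sub x eta).

Definition ultrametric_element (phi : V -> R) : Prop :=
  (forall x, 0 < phi x) /\
  (forall x, x <> o -> phi (par x) > phi x) /\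
  (forall r : nat -> V, ray r ->
     forall eps, 0 < eps -> exists N, forall n, (N <= n)%nat -> Rabs (phi (r n)) < eps).

Definition induced_by (phi : V -> R) (d : End_ -> End_ -> R) : Prop :=
  (forall xi, d xi xi = 0) /\
  (forall xi eta, xi <> eta -> forall v, confluent xi eta v -> d xi eta = phi v).

End Tree.

(* The closed ball of radius d(xi, eta) around xi is some dT_y; y lies on both
   geodesics, so it is an ancestor of their confluent v and every end through v lies in
   that ball.  Hence d(xi, eta) depends only on v, and phi v := d(xi, eta) for any pair
   of ends branching at v (one exists since every vertex has two children) gives
   d = d_phi.  An end through a sibling of x leaves the ball dT_x, which contains a pair
   branching at x, so phi decreases strictly.  Along a ray, the pairs branching at its
   vertices eventually lie in any prescribed ball dT_y around the end of the ray, so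
   phi tends to 0. *)
From Stdlib Require Import Reals List Arith Lia Lra FinFun Classical ClassicalEpsilon.
Open Scope R_scope.

Lemma injective_escapes_list {A : Type} (r : nat -> A) :
  (forall m n, r m = r n -> m = n) -> forall l : list A, exists n, ~ In (r n) l.
Proof.
  intros Rinj l. apply NNPP; intro Hall.
  assert (Hincl : incl (map r (seq 0 (S (length l)))) l).
  { intros v Hv. apply in_map_iff in Hv. destruct Hv as [n [<- _]].
    apply NNPP; intro Hn; apply Hall; exists n; exact Hn. }
  apply NoDup_incl_length in Hincl.
  - rewrite length_map, length_seq in Hincl. lia.
  - apply Injective_map_NoDup; [exact Rinj | apply seq_NoDup].
Qed.

Section Geodesics.
Context {V : Type} {o : V} {par : V -> V}.

Definition on_geodesic (xi : End_ o par) (v : V) : Prop := exists k, proj1_sig xi k = v.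

Lemma geodesic_iter_par {f} : ray_from_o o par f ->
  forall i p, (i <= p)%nat -> Nat.iter i par (f p) = f (p - i)%nat.
Proof.
  intros [_ Hc] i. induction i as [|i IH]; intros p Hp.
  - simpl. f_equal. lia.
  - simpl. rewrite IH by lia.
    replace (p - i)%nat with (S (p - S i)) by lia.
    exact (proj2 (Hc (p - S i)%nat)).
Qed.

Lemma geodesic_depth_unique {f g p q} : ray_from_o o par f -> ray_from_o o par g ->
  f p = g q -> p = q.
Proof.
  assert (Hlt : forall f g p q, ray_from_o o par f -> ray_from_o o par g ->
                  f p = g q -> ~ (p < q)%nat).
  { intros f' g' p' q' Hf Hg E Hpq.
    pose proof (geodesic_iter_par Hf p' p' (le_n _)) as Ef.
    pose proof (geodesic_iter_par Hg p' q' (Nat.lt_le_incl _ _ Hpq)) as Eg.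
    rewrite E, Eg, Nat.sub_diag, (proj1 Hf) in Ef.
    replace (q' - p')%nat with (S (q' - S p')) in Ef by lia.
    exact (proj1 (proj2 Hg _) Ef). }
  intros Hf Hg E. destruct (Nat.lt_trichotomy p q) as [h|[h|h]]; [|exact h|].
  - exfalso; exact (Hlt f g p q Hf Hg E h).
  - exfalso; exact (Hlt g f q p Hg Hf (eq_sym E) h).
Qed.

Lemma geodesic_agree_below {f g} : ray_from_o o par f -> ray_from_o o par g ->
  forall p, f p = g p -> forall i, (i <= p)%nat -> f i = g i.
Proof.
  intros Hf Hg p E i Hi.
  pose proof (geodesic_iter_par Hf (p - i) p ltac:(lia)) as Ef.
  pose proof (geodesic_iter_par Hg (p - i) p ltac:(lia)) as Eg.
  replace (p - (p - i))%nat with i in Ef, Eg by lia.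
  rewrite <- Ef, <- Eg, E. reflexivity.
Qed.

Lemma geodesic_parent (xi : End_ o par) n y : proj1_sig xi n = y -> y <> o ->
  exists k, n = S k /\ proj1_sig xi k = par y.
Proof.
  intros E Hy. destruct (proj2_sig xi) as [H0 Hc]. destruct n as [|k].
  - exfalso. apply Hy. rewrite <- E. exact H0.
  - exists k. split; [reflexivity|]. rewrite <- E. symmetry. exact (proj2 (Hc k)).
Qed.

Lemma geodesic_siblings_eq {xi : End_ o par} {x y} :
  on_geodesic xi x -> on_geodesic xi y -> x <> o -> y <> o -> par x = par y -> x = y.
Proof.
  intros [m Hm] [n Hn] Hx Hy Hpar.
  destruct (geodesic_parent xi m x Hm Hx) as [k [-> Hk]].
  destruct (geodesic_parent xi n y Hn Hy) as [k' [-> Hk']].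
  rewrite <- Hm, <- Hn. do 2 f_equal.
  apply (geodesic_depth_unique (proj2_sig xi) (proj2_sig xi)). congruence.
Qed.

Lemma confluent_of_children {xi eta : End_ o par} {x y z} :
  child o par x y -> child o par x z -> y <> z ->
  on_geodesic xi y -> on_geodesic eta z -> confluent xi eta x.
Proof.
  intros [Hy Hpy] [Hz Hpz] Hyz [m Hm] [n Hn].
  destruct (geodesic_parent xi m y Hm Hy) as [k [-> Hk]].
  destruct (geodesic_parent eta n z Hn Hz) as [k' [-> Hk']].
  assert (k' = k) as ->.
  { apply (geodesic_depth_unique (proj2_sig eta) (proj2_sig xi)). congruence. }
  exists k. split; [congruence|]. split; [congruence|]. congruence.
Qed.

Lemma confluent_on_geodesic {xi eta : End_ o par} {v} : confluent xi eta v ->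
  on_geodesic xi v /\ on_geodesic eta v.
Proof. intros [k [Hxi [Heta _]]]. split; exists k; assumption. Qed.

Lemma confluent_neq {xi eta : End_ o par} {v} : confluent xi eta v -> xi <> eta.
Proof. intros [k [_ [_ Hk]]] ->. exact (Hk eq_refl). Qed.

Hypothesis Htree : rooted_tree o par.

Lemma iter_par_root n : Nat.iter n par o = o.
Proof.
  induction n as [|n IH]; [reflexivity|]. simpl. rewrite IH. exact (proj1 Htree).
Qed.

Lemma geodesic_ancestor {f} : ray_from_o o par f ->
  forall j m, exists k, Nat.iter j par (f m) = f k.
Proof.
  intros Hf j m. destruct (le_lt_dec j m) as [h|h].
  - exists (m - j)%nat. exact (geodesic_iter_par Hf j m h).
  - exists 0%nat. replace j with ((j - m) + m)%nat by lia.
    rewrite Nat.iter_add, (geodesic_iter_par Hf m m (le_n _)), Nat.sub_diag,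
      (proj1 Hf).
    apply iter_par_root.
Qed.

Lemma bdry_sub_iff_on_geodesic x (xi : End_ o par) :
  bdry_sub x xi <-> on_geodesic xi x.
Proof.
  destruct xi as [f Hf]. unfold on_geodesic; simpl. split.
  - intros [r [[Rinj _] [[l Hl] Hsub]]].
    destruct (injective_escapes_list r Rinj l) as [n Hn].
    assert (Hm : in_range f (r n)).
    { apply NNPP; intro N. apply Hn, Hl. left. split; [exists n; reflexivity|exact N]. }
    destruct Hm as [m Em]. destruct (Hsub n) as [j Ej].
    rewrite <- Em in Ej. destruct (geodesic_ancestor Hf j m) as [k Ek].
    exists k. congruence.
  - intros [k Ek]. exists (fun n => f (n + k)%nat). split; [split|split].
    + intros m n E. apply (geodesic_depth_unique Hf Hf) in E. lia.
    + intros n. left. exact (proj2 Hf (n + k)%nat).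
    + exists (map f (seq 0 k)). intros v [[[n En] Hn]|[[m Em] Hm]].
      * exfalso; apply Hn; exists (n + k)%nat; exact En.
      * simpl in Em. destruct (le_lt_dec k m) as [h|h].
        -- exfalso; apply Hm; exists (m - k)%nat. rewrite <- Em. f_equal. lia.
        -- rewrite <- Em. apply in_map, in_seq. lia.
    + intros n. exists n. rewrite (geodesic_iter_par Hf n (n + k)) by lia.
      rewrite <- Ek. f_equal. lia.
Qed.

Lemma exists_depth x : exists N, Nat.iter N par x = o /\
  forall i, (i < N)%nat -> Nat.iter i par x <> o.
Proof.
  destruct (proj2 Htree x) as [n Hn].
  induction n as [n IH] using lt_wf_ind.
  destruct (classic (exists i, (i < n)%nat /\ Nat.iter i par x = o)) as [[i [Hi Ei]]|N].
  - exact (IH i Hi Ei).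
  - exists n. split; [exact Hn|]. intros i Hi E. apply N. exists i. auto.
Qed.

Lemma geodesic_extension x (s : nat -> V) : s 0%nat = x ->
  (forall j, child o par (s j) (s (S j))) ->
  exists (xi : End_ o par) N, forall j, proj1_sig xi (N + j)%nat = s j.
Proof.
  intros Hs0 Hs. destruct (exists_depth x) as [N [HN Hmin]].
  set (g := fun k => if Nat.leb k N then Nat.iter (N - k) par x else s (k - N)%nat).
  assert (Hg : ray_from_o o par g).
  { split.
    - unfold g. simpl. rewrite Nat.sub_0_r. exact HN.
    - intros n. unfold g.
      destruct (Nat.leb_spec (S n) N) as [h|h]; destruct (Nat.leb_spec n N) as [h'|h'].
      + split; [apply Hmin; lia|].
        replace (N - n)%nat with (S (N - S n)) by lia. reflexivity.
      + lia.
      + replace n with N by lia. rewrite Nat.sub_diag, <- Hs0.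
        replace (S N - N)%nat with 1%nat by lia. apply Hs.
      + replace (S n - N)%nat with (S (n - N)) by lia. apply Hs. }
  exists (exist _ g Hg), N. intros j. simpl. unfold g.
  destruct (Nat.leb_spec (N + j) N) as [h|h].
  - replace j with 0%nat by lia. rewrite Nat.add_0_r, Nat.sub_diag. auto.
  - f_equal. lia.
Qed.

(* A ray can step towards o only finitely often, and once it steps forward it can
   never step back without revisiting a vertex. *)
Lemma ray_eventually_forward (r : nat -> V) : ray o par r ->
  exists n0, forall j, child o par (r (n0 + j)%nat) (r (S (n0 + j))).
Proof.
  intros [Rinj Radj].
  assert (Hstep : forall n, child o par (r n) (r (S n)) ->
                    child o par (r (S n)) (r (S (S n)))).
  { intros n [_ Hn]. destruct (Radj (S n)) as [h|[_ h]]; [exact h|].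
    exfalso. rewrite Hn in h. apply Rinj in h. lia. }
  assert (Hex : exists n0, child o par (r n0) (r (S n0))).
  { apply NNPP; intro N.
    assert (Hback : forall n, child o par (r (S n)) (r n)).
    { intro n. destruct (Radj n) as [h|h]; [exfalso; apply N; eauto|exact h]. }
    assert (Hup : forall n, r n = Nat.iter n par (r 0%nat)).
    { induction n as [|n IH]; [reflexivity|]. simpl. rewrite <- IH.
      symmetry. exact (proj2 (Hback n)). }
    destruct (proj2 Htree (r 0%nat)) as [m Hm].
    apply (proj1 (Hback m)). rewrite Hup. exact Hm. }
  destruct Hex as [n0 H0]. exists n0. intros j. induction j as [|j IH].
  - rewrite Nat.add_0_r. exact H0.
  - rewrite Nat.add_succ_r. apply Hstep. exact IH.
Qed.

Lemma ray_tail_on_end (r : nat -> V) : ray o par r ->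
  exists (xi : End_ o par) n0 N, forall j, r (n0 + j)%nat = proj1_sig xi (N + j)%nat.
Proof.
  intros Hr. destruct (ray_eventually_forward r Hr) as [n0 Hn0].
  destruct (geodesic_extension (r n0) (fun j => r (n0 + j)%nat)) as [xi [N HN]].
  - simpl. rewrite Nat.add_0_r. reflexivity.
  - intros j. rewrite Nat.add_succ_r. apply Hn0.
  - exists xi, n0, N. intros j. symmetry. apply HN.
Qed.

Hypothesis Hdeg : forall x, fdeg_ge2 o par x.

Lemma end_through y : exists xi : End_ o par, on_geodesic xi y.
Proof.
  destruct (choice (child o par)) as [next Hnext].
  { intros x. destruct (Hdeg x) as [z [_ [_ [Hz _]]]]. exists z. exact Hz. }
  destruct (geodesic_extension y (fun j => Nat.iter j next y)) as [xi [N HN]].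
  - reflexivity.
  - intros j. apply Hnext.
  - exists xi, N. rewrite <- (Nat.add_0_r N). apply HN.
Qed.

Lemma confluent_exists x : exists xi eta : End_ o par, confluent xi eta x.
Proof.
  destruct (Hdeg x) as [y [z [Hyz [Hy Hz]]]].
  destruct (end_through y) as [xi Hxi]. destruct (end_through z) as [eta Heta].
  exists xi, eta. exact (confluent_of_children Hy Hz Hyz Hxi Heta).
Qed.

Lemma end_through_sibling {x} : x <> o ->
  exists eta : End_ o par, ~ on_geodesic eta x /\
    forall xi, on_geodesic xi x -> confluent xi eta (par x).
Proof.
  intros Hx. destruct (Hdeg (par x)) as [y [z [Hyz [Hy Hz]]]].
  assert (Hs : exists s, s <> x /\ child o par (par x) s).
  { destruct (classic (y = x)) as [->|h]; eauto. }
  destruct Hs as [s [Hsx Hs]]. destruct (end_through s) as [eta Heta].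
  exists eta. split.
  - intros Hxeta. apply Hsx.
    apply (geodesic_siblings_eq Heta Hxeta (proj1 Hs) Hx (proj2 Hs)).
  - intros xi Hxi.
    exact (confluent_of_children (conj Hx eq_refl) Hs (not_eq_sym Hsx) Hxi Heta).
Qed.

End Geodesics.

Section Ultrametric.
Context {V : Type} {o : V} {par : V -> V}.
Hypothesis Htree : rooted_tree o par.
Variable d : End_ o par -> End_ o par -> R.
Hypothesis Hd : ultrametric d.
Hypothesis Hballs : balls_are_subtrees d.

Lemma dist_self xi : d xi xi = 0.
Proof. exact (proj2 (proj1 Hd xi xi) eq_refl). Qed.

Lemma dist_sym xi eta : d xi eta = d eta xi.
Proof. exact (proj1 (proj2 (proj2 Hd)) xi eta). Qed.

Lemma dist_ultra xi eta zeta : d xi zeta <= Rmax (d xi eta) (d eta zeta).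
Proof. exact (proj2 (proj2 (proj2 Hd)) xi eta zeta). Qed.

Lemma dist_pos {xi eta} : xi <> eta -> 0 < d xi eta.
Proof.
  intros Hne.
  destruct (Rle_lt_or_eq_dec _ _ (proj1 (proj2 Hd) xi eta)) as [h|h]; [exact h|].
  exfalso. apply Hne, (proj1 Hd). symmetry. exact h.
Qed.

Lemma dist_le_of_ball xi eta zeta t : d zeta xi <= t -> d zeta eta <= t -> d xi eta <= t.
Proof.
  intros Hxi Heta. eapply Rle_trans; [apply (dist_ultra xi zeta eta)|].
  rewrite dist_sym. apply Rmax_lub; assumption.
Qed.

Lemma ball_is_subtree xi {t} : 0 < t ->
  exists y, forall eta, d xi eta <= t <-> on_geodesic eta y.
Proof.
  intros Ht. destruct (proj1 Hballs xi t Ht) as [y Hy]. exists y. intros eta.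
  rewrite <- (bdry_sub_iff_on_geodesic Htree). apply Hy.
Qed.

Lemma subtree_is_ball x : exists zeta r, forall eta, d zeta eta <= r <-> on_geodesic eta x.
Proof.
  destruct (proj2 Hballs x) as [zeta [r [_ Hz]]]. exists zeta, r. intros eta.
  rewrite <- (bdry_sub_iff_on_geodesic Htree). apply Hz.
Qed.

Lemma dist_le_confluent xi eta zeta v : confluent xi eta v -> on_geodesic zeta v ->
  d xi zeta <= d xi eta.
Proof.
  intros Hconf [j Hj]. destruct Hconf as [k [Hxk [Hek Hsplit]]].
  pose proof (proj2_sig xi) as Rxi. pose proof (proj2_sig eta) as Reta.
  pose proof (proj2_sig zeta) as Rzeta.
  assert (Ht : 0 < d xi eta) by (apply dist_pos; intros ->; exact (Hsplit eq_refl)).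
  destruct (ball_is_subtree xi Ht) as [y Hy].
  destruct (proj1 (Hy xi)) as [m Hm]; [rewrite dist_self; lra|].
  destruct (proj1 (Hy eta) (Rle_refl _)) as [m' Hm'].
  assert (m' = m) as ->.
  { apply (geodesic_depth_unique Reta Rxi). congruence. }
  assert (Hmk : (m <= k)%nat).
  { destruct (le_lt_dec m k) as [h|h]; [exact h|]. exfalso. apply Hsplit.
    apply (geodesic_agree_below Rxi Reta m); [congruence|lia]. }
  assert (j = k) as ->.
  { apply (geodesic_depth_unique Rzeta Rxi). congruence. }
  apply Hy. exists m. rewrite <- Hm.
  apply (geodesic_agree_below Rzeta Rxi k); [congruence|exact Hmk].
Qed.

Lemma dist_confluent_eq {xi eta xi' eta' v} :
  confluent xi eta v -> confluent xi' eta' v -> d xi eta = d xi' eta'.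
Proof.
  assert (Hle : forall xi eta xi' eta', confluent xi eta v -> confluent xi' eta' v ->
                  d xi eta <= d xi' eta').
  { intros a b a' b' Hab Hab'.
    destruct (confluent_on_geodesic Hab) as [Ha Hb].
    apply (dist_le_of_ball a b a'); eapply dist_le_confluent; eassumption. }
  intros H H'. apply Rle_antisym; auto.
Qed.

Lemma dist_lt_leaving_subtree {x xi eta eta'} :
  on_geodesic xi x -> on_geodesic eta x -> ~ on_geodesic eta' x -> d xi eta < d xi eta'.
Proof.
  intros Hxi Heta Heta'. destruct (subtree_is_ball x) as [zeta [r Hball]].
  apply Rnot_le_lt. intros Hle. apply Heta', Hball.
  assert (Hxi_r : d zeta xi <= r) by (apply Hball; exact Hxi).
  assert (Hr : d xi eta <= r)
    by (apply (dist_le_of_ball xi eta zeta); apply Hball; assumption).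
  eapply Rle_trans; [apply (dist_ultra zeta xi eta')|]. apply Rmax_lub; lra.
Qed.

Lemma dist_small_deep xi eps : 0 < eps ->
  exists m, forall eta, proj1_sig eta m = proj1_sig xi m -> d xi eta <= eps.
Proof.
  intros Heps. destruct (ball_is_subtree xi Heps) as [y Hy].
  destruct (proj1 (Hy xi)) as [m Hm]; [rewrite dist_self; lra|].
  exists m. intros eta Heta. apply Hy. exists m. congruence.
Qed.

Hypothesis Hdeg : forall x, fdeg_ge2 o par x.

Lemma dist_factors_through_confluent :
  exists phi : V -> R, forall v xi eta, confluent xi eta v -> d xi eta = phi v.
Proof.
  destruct (choice (fun v (p : End_ o par * End_ o par) => confluent (fst p) (snd p) v))
    as [pair Hpair].
  { intros v. destruct (confluent_exists Htree Hdeg v) as [xi [eta H]].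
    exists (xi, eta). exact H. }
  exists (fun v => d (fst (pair v)) (snd (pair v))). intros v xi eta H.
  exact (dist_confluent_eq H (Hpair v)).
Qed.

Variable phi : V -> R.
Hypothesis Hphi : forall v xi eta, confluent xi eta v -> d xi eta = phi v.

Lemma phi_pos x : 0 < phi x.
Proof.
  destruct (confluent_exists Htree Hdeg x) as [xi [eta H]].
  rewrite <- (Hphi _ _ _ H). exact (dist_pos (confluent_neq H)).
Qed.

Lemma phi_par_gt x : x <> o -> phi (par x) > phi x.
Proof.
  intros Hx. destruct (confluent_exists Htree Hdeg x) as [xi [eta H]].
  destruct (end_through_sibling Htree Hdeg Hx) as [eta' [Hout Hsib]].
  destruct (confluent_on_geodesic H) as [Hxi Heta].
  rewrite <- (Hphi _ _ _ H), <- (Hphi _ _ _ (Hsib xi Hxi)).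
  exact (dist_lt_leaving_subtree Hxi Heta Hout).
Qed.

Lemma phi_vanishes_along_rays (r : nat -> V) : ray o par r ->
  forall eps, 0 < eps -> exists N, forall n, (N <= n)%nat -> Rabs (phi (r n)) < eps.
Proof.
  intros Hr eps Heps.
  destruct (ray_tail_on_end Htree r Hr) as [xi [n0 [N Htail]]].
  destruct (dist_small_deep xi (eps / 2)) as [m Hm]; [lra|].
  exists (n0 + m)%nat. intros n Hn.
  destruct (confluent_exists Htree Hdeg (r n)) as [a [b Hab]].
  pose proof Hab as [k [Hak [Hbk _]]].
  replace n with (n0 + (n - n0))%nat in Hak, Hbk by lia. rewrite Htail in Hak, Hbk.
  assert (Hk : k = (N + (n - n0))%nat)
    by exact (geodesic_depth_unique (proj2_sig a) (proj2_sig xi) Hak).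
  assert (Hclose : forall c : End_ o par,
            proj1_sig c k = proj1_sig xi k -> d xi c <= eps / 2).
  { intros c Hc. apply Hm. symmetry.
    apply (geodesic_agree_below (proj2_sig xi) (proj2_sig c) k); [congruence|lia]. }
  rewrite Rabs_pos_eq by (apply Rlt_le, phi_pos).
  rewrite <- (Hphi _ _ _ Hab).
  assert (d a b <= eps / 2) by (apply (dist_le_of_ball a b xi); apply Hclose; congruence).
  lra.
Qed.

End Ultrametric.

Theorem lemma2p2 (V : Type) (o : V) (par : V -> V)
  (Htree : @rooted_tree V o par)
  (Hlf : @locally_finite V o par)
  (Hinf : infinite_tree V)
  (Hdeg : forall x, @fdeg_ge2 V o par x)
  (d : @End_ V o par -> @End_ V o par -> R)
  (Hd : @ultrametric V o par d)
  (Hballs : @balls_are_subtrees V o par d) :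
  exists phi : V -> R, @ultrametric_element V o par phi /\ @induced_by V o par phi d.
Proof.
  destruct (dist_factors_through_confluent Htree d Hd Hballs Hdeg) as [phi Hphi].
  exists phi. split; [split; [|split]|split].
  - exact (phi_pos Htree d Hd Hdeg phi Hphi).
  - exact (phi_par_gt Htree d Hd Hballs Hdeg phi Hphi).
  - exact (phi_vanishes_along_rays Htree d Hd Hballs Hdeg phi Hphi).
  - exact (dist_self d Hd).
  - intros xi eta _ v Hv. exact (Hphi v xi eta Hv).
Qed.
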